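(* Let $n\ge 2$ and $k\ge 1$. If there exists a set of $k$ Gozinta Boxes in dimension $n$, then there exists a set of $k$ Gozinta Boxes in dimension $n-1$.
   Context: An $n$-dimensional box $A$ has closed side lengths $a_1\le\dots\le a_n$ (positive reals). A state of $A$ is either closed or expanded along one side $i$: $a_i$ is replaced by $a_i'$ with $a_i\le a_i'\le 2a_i$, other sides unchanged (only one side can expand). The dimension vector of a state is its side lengths sorted non-decreasingly. A box in some state fits inside another box in some state if each coordinate of the outer one's dimension vector is strictly larger than the corresponding coordinate of the inner one's. An order $X_1,\dots,X_k$ (innermost to outermost) is a possible arrangement if each box can be given a state so that $X_j$ fits inside $X_{j+1}$ for all $j$; states may differ between arrangements. A set of $k$ Gozinta Boxes is a collection of $k$ boxes $A_1,\dots,A_k$ (of the same dimension) such that both the natural order $A_1,\dots,A_k$ and the reverse order $A_k,\dots,A_1$ are possible arrangements. *)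

From mathcomp Require Import all_boot all_order all_algebra.
From mathcomp Require Import reals.
Set Implicit Arguments. Unset Strict Implicit. Unset Printing Implicit Defensive.
Import Order.TTheory GRing.Theory Num.Theory.
Local Open Scope ring_scope.

(* A box in dimension n is given by its list of closed side lengths:
   n positive reals (order of the list is irrelevant: only the sorted
   dimension vector is ever used). *)
Definition is_box (R : realType) (n : nat) (a : seq R) : Prop :=
  size a = n /\ all (fun x => 0 < x) a.

(* s is (the list of side lengths of) a state of the box a: either closed,
   or expanded along exactly one side i, a_i <= a_i' <= 2 a_i. *)
Definition is_state (R : realType) (a s : seq R) : Prop :=
  s = a \/
  exists (i : nat) (x : R),
    (i < size a)%N /\ nth 0 a i <= x <= 2 * nth 0 a i /\ s = set_nth 0 a i x.

Definition dimvec (R : realType) (s : seq R) : seq R := sort <=%R s.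

Definition fits (R : realType) (s_in s_out : seq R) : Prop :=
  all2 (fun x y => x < y) (dimvec s_in) (dimvec s_out).

Definition possible_arrangement (R : realType) (X : seq (seq R)) : Prop :=
  exists S : seq (seq R),
    size S = size X /\
    (forall j, (j < size X)%N -> is_state (nth [::] X j) (nth [::] S j)) /\
    (forall j, (j.+1 < size X)%N -> fits (nth [::] S j) (nth [::] S j.+1)).

Definition gozinta (R : realType) (n k : nat) (A : seq (seq R)) : Prop :=
  size A = k /\
  (forall j, (j < k)%N -> is_box n (nth [::] A j)) /\
  possible_arrangement A /\
  possible_arrangement (rev A).

From mathcomp Require Import all_boot all_order all_algebra.
From mathcomp Require Import reals.
Set Implicit Arguments. Unset Strict Implicit. Unset Printing Implicit Defensive.
Import Order.TTheory GRing.Theory Num.Theory.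

(* Drop the largest side of every box.  If a box has sides [rcons b M] with
   [M] maximal, every state of it yields a state of the box [b] whose
   dimension vector is the old one minus its last entry: when a side
   [y <> M] was expanded to some [x > M], expand [y] only up to [M] instead
   (legal since [y <= M < x <= 2y]) and let [x] be the dropped largest
   coordinate.  Fitting compares sorted vectors coordinatewise, so
   truncating all of them preserves both arrangements. *)

Lemma all2_take (T1 T2 : Type) (r : T1 -> T2 -> bool) m s t :
  all2 r s t -> all2 r (take m s) (take m t).
Proof.
by elim: s t m => [|x s IHs] [|y t] [|m] //= /andP[-> /IHs ->].
Qed.

Lemma seq_choice (T : Type) (x0 : T) (P : nat -> T -> Prop) m :
  (forall j, (j < m)%N -> exists x, P j x) ->
  exists2 s : seq T, size s = m & forall j, (j < m)%N -> P j (nth x0 s j).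
Proof.
elim: m => [|m IHm] exP; first by exists [::].
have [|s size_s Ps] := IHm; first by move=> j /ltnW; apply: exP.
have [x Px] := exP m (ltnSn m).
exists (rcons s x) => [|j]; first by rewrite size_rcons size_s.
rewrite ltnS leq_eqVlt nth_rcons size_s => /predU1P[->|ltjm].
  by rewrite ltnn eqxx.
by rewrite ltjm; apply: Ps.
Qed.

Section SetNth.
Variables (T : Type) (x0 : T).

Lemma set_nth_rcons_size (s : seq T) y x :
  set_nth x0 (rcons s y) (size s) x = rcons s x.
Proof. by elim: s => //= z s ->. Qed.

Lemma set_nth_rcons (s : seq T) y i x : (i < size s)%N ->
  set_nth x0 (rcons s y) i x = rcons (set_nth x0 s i x) y.
Proof. by elim: s i => [|z s IHs] [|i] //= /IHs ->. Qed.

Lemma all_set_nth (p : pred T) (s : seq T) i x : (i < size s)%N ->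
  all p s -> p x -> all p (set_nth x0 s i x).
Proof.
move=> lt_i_s; rewrite set_nthE lt_i_s.
rewrite -{1}(cat_take_drop i s) (drop_nth x0 lt_i_s) !all_cat /=.
by case/and3P=> -> _ -> ->.
Qed.

End SetNth.

Section PermSetNth.
Variables (T : eqType) (x0 : T).

Lemma perm_set_nth (s t : seq T) i x : perm_eq s t -> (i < size s)%N ->
  perm_eq (set_nth x0 s i x) (set_nth x0 t (index (nth x0 s i) t) x).
Proof.
move=> st lt_i_s.
have t_y : nth x0 s i \in t by rewrite -(perm_mem st) mem_nth.
apply/permP => p.
by rewrite !count_set_nth_ltn ?index_mem // nth_index // (permP st).
Qed.

Lemma perm_rcons_set_nth (s : seq T) i x y : (i < size s)%N ->
  perm_eq (rcons (set_nth x0 s i x) y) (rcons (set_nth x0 s i y) x).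
Proof.
move=> lt_i_s; rewrite !set_nthE lt_i_s -!cats1 -!catA perm_cat2l.
apply/permP => p; rewrite /= !count_cat /= !addn0.
by rewrite addnCA [RHS]addnCA [p x + _]addnC.
Qed.

End PermSetNth.

Lemma sort_le_rcons (d : Order.disp_t) (T : orderType d) (s : seq T) x :
  all (<=%O^~ x) s -> sort <=%O (rcons s x) = rcons (sort <=%O s) x.
Proof.
move=> s_le_x.
have sorted_rhs : sorted <=%O (rcons (sort <=%O s) x).
  rewrite (sorted_pairwise le_trans) -cats1 pairwise_cat allrel1r /= andbT.
  by rewrite all_sort s_le_x -(sorted_pairwise le_trans) sort_le_sorted.
rewrite -(sorted_sort le_trans sorted_rhs); apply/perm_sort_leP.
by rewrite -!cats1 perm_cat2r perm_sym perm_sort.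
Qed.

Section DropMax.
Variable R : realType.
Local Open Scope ring_scope.
Implicit Types (a b s t : seq R).

Lemma state_size a s : is_state a s -> size s = size a.
Proof.
by case=> [->|[i [x [lt_i_a [_ ->]]]]] //; rewrite size_set_nth; apply/maxn_idPr.
Qed.

Lemma perm_state a a' s : perm_eq a a' -> is_state a s ->
  exists2 s', is_state a' s' & perm_eq s s'.
Proof.
move=> aa' [->|[i [x [lt_i_a [x_range ->]]]]]; first by exists a'; [left|].
have a'_y : nth 0 a i \in a' by rewrite -(perm_mem aa') mem_nth.
exists (set_nth 0 a' (index (nth 0 a i) a') x); last exact: perm_set_nth.
by right; exists (index (nth 0 a i) a'), x; rewrite index_mem nth_index.
Qed.

Lemma state_rcons_max b M s : all (<= M) b -> is_state (rcons b M) s ->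
  exists t X, [/\ is_state b t, perm_eq s (rcons t X) & all (<= X) t].
Proof.
move=> b_le_M [->|[i [x [+ [/andP[+ +] ->]]]]].
  by exists b, M; split=> //; left.
rewrite size_rcons ltnS leq_eqVlt nth_rcons => /predU1P[->|lt_i_b].
  rewrite ltnn eqxx set_nth_rcons_size => le_M_x _.
  exists b, x; split=> //; first by left.
  by apply: sub_all b_le_M => z /le_trans; apply.
rewrite lt_i_b set_nth_rcons // => le_y_x le_x_2y.
have le_y_M : nth 0 b i <= M by apply: (allP b_le_M); rewrite mem_nth.
have [le_x_M | lt_M_x] := leP x M.
  exists (set_nth 0 b i x), M; split=> //; last exact: all_set_nth.
  by right; exists i, x; rewrite le_y_x le_x_2y.
exists (set_nth 0 b i M), x; split; last 2 first.
- exact: perm_rcons_set_nth.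
- apply: all_set_nth => //; last exact: ltW.
  by apply: sub_all b_le_M => z /le_trans; apply; apply: ltW.
by right; exists i, M; rewrite le_y_M (le_trans (ltW lt_M_x)).
Qed.

Definition drop_max a : seq R := take (size a).-1 (dimvec a).

Lemma drop_max_box n a : is_box n.+1 a -> is_box n (drop_max a).
Proof.
case=> size_a pos_a; split.
  by rewrite size_takel size_a // size_sort size_a leqnSn.
by apply/allP => z /mem_take; rewrite mem_sort; apply: (allP pos_a).
Qed.

Lemma state_drop_max n a s : size a = n.+1 -> is_state a s ->
  exists2 t, is_state (drop_max a) t & dimvec t = take n (dimvec s).
Proof.
move=> size_a st_s; rewrite /drop_max /dimvec size_a /=.
have : size (sort <=%R a) = n.+1 by rewrite size_sort.
move: (sort_le_sorted a) (perm_sort <=%R a).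
case/lastP: (sort <=%R a) => [|b M] // sorted_bM perm_bM.
rewrite size_rcons => -[size_b].
have b_le_M : all (<= M) b.
  move: sorted_bM; rewrite (sorted_pairwise le_trans) -cats1 pairwise_cat.
  by rewrite allrel1r => /andP[].
have a_bM : perm_eq a (rcons b M) by rewrite perm_sym; apply: permEl.
have [s' st_s' ss'] := perm_state a_bM st_s.
have [t [X [st_t s't t_le_X]]] := state_rcons_max b_le_M st_s'.
exists t; first by rewrite -cats1 -size_b take_size_cat.
have /perm_sort_leP-> := perm_trans ss' s't.
by rewrite sort_le_rcons // -cats1 take_size_cat // size_sort (state_size st_t) size_b.
Qed.

Lemma arrangement_drop_max n X : {in X, forall a, size a = n.+1} ->
  possible_arrangement X -> possible_arrangement (map drop_max X).
Proof.
move=> size_X [S [_ [st_S fit_S]]].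
have [|T size_T T_spec] := @seq_choice _ [::]
  (fun j t => is_state (drop_max (nth [::] X j)) t /\
              dimvec t = take n (dimvec (nth [::] S j))) (size X).
  move=> j lt_j.
  by have [t] := state_drop_max (size_X _ (mem_nth [::] lt_j)) (st_S j lt_j); exists t.
exists T; rewrite size_map; split=> //; split=> [j lt_j | j lt_j].
  by rewrite (nth_map [::]) //; case: (T_spec j lt_j).
rewrite /fits (proj2 (T_spec j (ltnW lt_j))) (proj2 (T_spec _ lt_j)).
exact/all2_take/fit_S.
Qed.

Lemma gozinta_drop_max n k A : gozinta n.+1 k A -> gozinta n k (map drop_max A).
Proof.
case=> size_A [box_A [arr_A arr_rev_A]].
have {}box_A : {in A, forall a, is_box n.+1 a}.
  by move=> a /(nthP [::])[j lt_j <-]; apply: box_A; rewrite -size_A.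
have size_A' : {in A, forall a, size a = n.+1} by move=> a /box_A[].
split; first by rewrite size_map.
split=> [j lt_j|].
  rewrite (nth_map [::]) ?size_A //.
  by apply/drop_max_box/box_A/mem_nth; rewrite size_A.
split; first exact: arrangement_drop_max size_A' arr_A.
rewrite -map_rev; apply: (arrangement_drop_max _ arr_rev_A) => a.
by rewrite mem_rev; apply: size_A'.
Qed.

End DropMax.

Theorem proposition15 (R : realType) (n k : nat) :
  (2 <= n)%N -> (1 <= k)%N ->
  (exists A : seq (seq R), gozinta n k A) ->
  exists B : seq (seq R), gozinta n.-1 k B.
Proof.
move=> lt1n _ [A gozA]; exists (map (@drop_max R) A).
by rewrite -(ltn_predK lt1n) in gozA; apply: gozinta_drop_max.
Qed.
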